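(* Let $M$ and $N$ be $n$-manifolds with bounded geometry and let $(f_j)$ be a sequence of $R$-uniformly $k$-to-one $L$-LQ-mappings $M\to N$ converging locally uniformly to a continuous mapping $f\colon M\to N$. Then $f$ is an $R$-uniformly $k$-to-one $L$-LQ-mapping.
   Context: A metric manifold $M$ has bounded geometry if it is a complete length space and there exist $C\ge1$, $R_0>0$ such that for every $x\in M$ there is a $C$-bilipschitz map $B_M(x,R_0)\to B_{\mathbb{R}^n}(0,R_0)$; $B_X(x,r)$ denotes the open ball. A map $f\colon M\to N$ is an $L$-LQ-mapping if $B_N(f(x),L^{-1}r)\subset f(B_M(x,r))\subset B_N(f(x),Lr)$ for all $x\in M$, $r>0$. A map $f\colon X\to Y$ is $R$-uniformly $k$-to-one if $\#\big(f^{-1}\{f(x)\}\cap B_X(x,R)\big)\le k$ for all $x\in X$. *)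

From Stdlib Require Import Reals Lra List Sorted.
Import ListNotations.
Open Scope R_scope.

Definition is_metric {X : Type} (d : X -> X -> R) : Prop :=
  (forall x y, 0 <= d x y) /\
  (forall x y, d x y = 0 <-> x = y) /\
  (forall x y, d x y = d y x) /\
  (forall x y z, d x z <= d x y + d y z).

Definition ball {X : Type} (d : X -> X -> R) (x : X) (r : R) (y : X) : Prop :=
  d x y < r.

Definition complete {X : Type} (d : X -> X -> R) : Prop :=
  forall u : nat -> X,
    (forall eps, 0 < eps -> exists N, forall p q, (N <= p)%nat -> (N <= q)%nat ->
        d (u p) (u q) < eps) ->
    exists l, forall eps, 0 < eps -> exists N, forall p, (N <= p)%nat -> d (u p) l < eps.

Fixpoint chain_length {X : Type} (d : X -> X -> R) (gamma : R -> X) (ts : list R) : R :=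
  match ts with
  | t1 :: ((t2 :: _) as rest) => d (gamma t1) (gamma t2) + chain_length d gamma rest
  | _ => 0
  end.

Definition path_continuous {X : Type} (d : X -> X -> R) (gamma : R -> X) : Prop :=
  forall t, 0 <= t <= 1 -> forall eps, 0 < eps -> exists delta, 0 < delta /\
    forall s, 0 <= s <= 1 -> Rabs (s - t) < delta -> d (gamma t) (gamma s) < eps.

Definition path_length_le {X : Type} (d : X -> X -> R) (gamma : R -> X) (Lmax : R) : Prop :=
  forall ts : list R, Sorted Rle ts -> Forall (fun t => 0 <= t <= 1) ts ->
    chain_length d gamma ts <= Lmax.

(** Length space: d x y is the infimum of lengths of continuous paths from x to y
    (lengths are always >= d x y, so it suffices to approximate from above). *)
Definition length_space {X : Type} (d : X -> X -> R) : Prop :=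
  forall x y eps, 0 < eps -> exists gamma : R -> X,
    path_continuous d gamma /\ gamma 0 = x /\ gamma 1 = y /\
    path_length_le d gamma (d x y + eps).

Definition Rn (n : nat) : Type := {v : nat -> R | forall i, (n <= i)%nat -> v i = 0}.

Fixpoint sum_lt (n : nat) (f : nat -> R) : R :=
  match n with
  | O => 0
  | S m => sum_lt m f + f m
  end.

Definition eucl_dist (n : nat) (v w : Rn n) : R :=
  sqrt (sum_lt n (fun i => (proj1_sig v i - proj1_sig w i) ^ 2)).

Definition eucl_norm (n : nat) (v : Rn n) : R :=
  sqrt (sum_lt n (fun i => (proj1_sig v i) ^ 2)).

Definition bilip_ball_chart {X : Type} (d : X -> X -> R) (n : nat) (C r0 : R) (x : X) : Prop :=
  exists phi : X -> Rn n,
    (forall y z, ball d x r0 y -> ball d x r0 z ->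
       / C * d y z <= eucl_dist n (phi y) (phi z) /\
       eucl_dist n (phi y) (phi z) <= C * d y z) /\
    (forall y, ball d x r0 y -> eucl_norm n (phi y) < r0) /\
    (forall v : Rn n, eucl_norm n v < r0 -> exists y, ball d x r0 y /\ phi y = v).

Definition bounded_geometry {X : Type} (d : X -> X -> R) (n : nat) : Prop :=
  is_metric d /\ complete d /\ length_space d /\
  exists C r0, 1 <= C /\ 0 < r0 /\ forall x, bilip_ball_chart d n C r0 x.

Definition LQ_map {X Y : Type} (dX : X -> X -> R) (dY : Y -> Y -> R) (L : R) (f : X -> Y) : Prop :=
  forall x r, 0 < r ->
    (forall z, ball dY (f x) (/ L * r) z -> exists y, ball dX x r y /\ f y = z) /\
    (forall y, ball dX x r y -> ball dY (f x) (L * r) (f y)).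

Definition unif_k_to_one {X Y : Type} (dX : X -> X -> R) (Rad : R) (k : nat) (f : X -> Y) : Prop :=
  forall x (l : list X), NoDup l ->
    (forall y, In y l -> f y = f x /\ ball dX x Rad y) -> (length l <= k)%nat.

Definition continuous_map {X Y : Type} (dX : X -> X -> R) (dY : Y -> Y -> R) (f : X -> Y) : Prop :=
  forall x eps, 0 < eps -> exists delta, 0 < delta /\
    forall y, dX x y < delta -> dY (f x) (f y) < eps.

Definition loc_unif_conv {X Y : Type} (dX : X -> X -> R) (dY : Y -> Y -> R)
    (fs : nat -> X -> Y) (f : X -> Y) : Prop :=
  forall x, exists r, 0 < r /\ forall eps, 0 < eps -> exists J, forall j, (J <= j)%nat ->
    forall y, dX x y < r -> dY (fs j y) (f y) < eps.

From Stdlib Require Import Reals Lra Lia List Sorted Classical ClassicalEpsilon.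
Import ListNotations.
Open Scope R_scope.

(* The upper LQ bound and the k-to-one bound
   are stable under locally uniform convergence: for the latter, the
   co-Lipschitz property of a late [f_j] moves [k+1] distinct preimages of
   [f x] to [k+1] distinct nearby preimages of [f_j x]. The lower LQ bound is
   the real point, since a limit of surjections onto balls need not be onto:
   Ekeland's variational principle, applied on the complete space [M] to
   [w |-> d(f w, z)] with a slope [c < 1/L], yields an almost-minimiser [y]
   near [x], and the co-Lipschitz property of a late [f_j] together with
   near-geodesics in the length space [N] force [f y = z]. *)

Section MetricFacts.
Context {X : Type} (d : X -> X -> R) (Hd : is_metric d).

Lemma dist_ge0 x y : 0 <= d x y.
Proof. exact (proj1 Hd x y). Qed.

Lemma dist_self x : d x x = 0.
Proof. now apply (proj1 (proj2 Hd)). Qed.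

Lemma dist_eq0 x y : d x y = 0 -> x = y.
Proof. apply (proj1 (proj2 Hd)). Qed.

Lemma dist_sym x y : d x y = d y x.
Proof. exact (proj1 (proj2 (proj2 Hd)) x y). Qed.

Lemma dist_triangle x y z : d x z <= d x y + d y z.
Proof. exact (proj2 (proj2 (proj2 Hd)) x y z). Qed.

Lemma dist_diff_le p a b : Rabs (d p a - d p b) <= d a b.
Proof.
  pose proof (dist_triangle p a b); pose proof (dist_triangle p b a).
  rewrite (dist_sym b a) in *. apply Rabs_le; lra.
Qed.

Lemma dist_neq_pos x y : x <> y -> 0 < d x y.
Proof.
  intros hxy. destruct (Rle_lt_or_eq_dec 0 _ (dist_ge0 x y)) as [h|h]; auto.
  now destruct hxy; apply dist_eq0.
Qed.

End MetricFacts.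

Lemma inv_INR_S_pos n : 0 < / INR (S n).
Proof. apply Rinv_0_lt_compat, lt_0_INR; lia. Qed.

Lemma exists_inv_INR_S_lt t : 0 < t -> exists N, / INR (S N) < t.
Proof.
  intros ht. destruct (archimed_cor1 t ht) as (N & H1 & H2).
  exists (pred N). now rewrite Nat.succ_pred_pos.
Qed.
Section Ekeland.
Context {X : Type} (d : X -> X -> R) (phi : X -> R) (c m : R).
Hypotheses (Hd : is_metric d) (Hcomplete : complete d) (hc : 0 < c)
  (phi_ge : forall y, m <= phi y)
  (phi_lsc : forall y eps, 0 < eps -> exists delta, 0 < delta /\
     forall w, d y w < delta -> phi y < phi w + eps).

(* The partial order of Ekeland's principle: [w] lies below [y] when going from
   [y] to [w] decreases [phi] by at least [c] times the distance travelled. *)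
Definition ekeland_below (y w : X) : Prop := phi w + c * d y w <= phi y.

Lemma ekeland_below_refl y : ekeland_below y y.
Proof. unfold ekeland_below. rewrite dist_self by auto. lra. Qed.

Lemma ekeland_below_trans y v w :
  ekeland_below y v -> ekeland_below v w -> ekeland_below y w.
Proof.
  unfold ekeland_below. intros h1 h2. pose proof (dist_triangle d Hd y v w). nra.
Qed.

Lemma ekeland_below_near_inf y e : 0 < e ->
  exists w, ekeland_below y w /\ forall v, ekeland_below y v -> phi w <= phi v + e.
Proof.
  intros he.
  set (E := fun t => exists w, ekeland_below y w /\ t = - phi w).
  assert (E_bound : bound E).
  { exists (- m). intros t (w & _ & ->). specialize (phi_ge w). lra. }
  assert (E_inh : exists t, E t) by (exists (- phi y); exists y; split; auto using ekeland_below_refl).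
  destruct (completeness E E_bound E_inh) as (s & s_ub & s_lub).
  destruct (classic (exists w, ekeland_below y w /\ s - e < - phi w)) as [(w & hw & hs) | hnone].
  - exists w. split; auto. intros v hv.
    assert (- phi v <= s) by (apply s_ub; exists v; auto). lra.
  - exfalso. enough (s <= s - e) by lra.
    apply s_lub. intros t (w & hw & ->).
    apply Rnot_lt_le. intro hs. apply hnone. now exists w.
Qed.

Definition ekeland_step (n : nat) (y : X) : X :=
  proj1_sig (constructive_indefinite_description _
    (ekeland_below_near_inf y (/ INR (S n)) (inv_INR_S_pos n))).

Fixpoint ekeland_seq (x0 : X) (n : nat) : X :=
  match n with
  | O => x0
  | S n' => ekeland_step n' (ekeland_seq x0 n')
  end.

Variable x0 : X.
Notation u := (ekeland_seq x0).

Lemma ekeland_seq_step n : ekeland_below (u n) (u (S n)) /\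
  forall v, ekeland_below (u n) v -> phi (u (S n)) <= phi v + / INR (S n).
Proof. simpl. unfold ekeland_step. apply proj2_sig. Qed.

Lemma ekeland_seq_below n p : (n <= p)%nat -> ekeland_below (u n) (u p).
Proof.
  induction 1; [apply ekeland_below_refl|].
  eapply ekeland_below_trans; eauto. apply ekeland_seq_step.
Qed.

(* The sets below [u (S n)] have diameter at most [2 / c(n+1)], since [u (S n)]
   nearly minimises [phi] below [u n]. *)
Lemma ekeland_below_seq_close n v w :
  ekeland_below (u (S n)) v -> ekeland_below (u (S n)) w ->
  c * d v w <= 2 * / INR (S n).
Proof.
  assert (radius : forall v, ekeland_below (u (S n)) v -> c * d (u (S n)) v <= / INR (S n)).
  { intros v' hv'. destruct (ekeland_seq_step n) as [h1 h2].
    specialize (h2 v' (ekeland_below_trans _ _ _ h1 hv')). unfold ekeland_below in hv'. lra. }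
  intros hv hw. pose proof (radius v hv); pose proof (radius w hw).
  pose proof (dist_triangle d Hd v (u (S n)) w). rewrite (dist_sym d Hd v (u (S n))) in *. nra.
Qed.

Lemma ekeland_seq_cauchy eps : 0 < eps ->
  exists N, forall p q, (N <= p)%nat -> (N <= q)%nat -> d (u p) (u q) < eps.
Proof.
  intros he. destruct (exists_inv_INR_S_lt (c * eps / 2)) as (N & hN); [nra|].
  exists (S N). intros p q hp hq.
  pose proof (ekeland_below_seq_close N _ _ (ekeland_seq_below _ _ hp) (ekeland_seq_below _ _ hq)).
  apply Rmult_lt_reg_l with c; lra.
Qed.

Lemma ekeland_below_limit l :
  (forall eps, 0 < eps -> exists N, forall p, (N <= p)%nat -> d (u p) l < eps) ->
  forall n, ekeland_below (u n) l.
Proof.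
  intros Hl n. unfold ekeland_below. apply Rle_plus_epsilon. intros eps he.
  set (e := eps / (1 + c)).
  destruct (phi_lsc l e) as (delta & hdelta & Hdelta); [unfold e; apply Rdiv_lt_0_compat; lra|].
  destruct (Hl (Rmin delta e)) as (N & HN); [apply Rmin_pos; auto; unfold e; apply Rdiv_lt_0_compat; lra|].
  set (p := max N n). specialize (HN p (Nat.le_max_l _ _)).
  pose proof (Rmin_l delta e); pose proof (Rmin_r delta e).
  specialize (Hdelta (u p)). rewrite dist_sym in Hdelta by auto.
  specialize (Hdelta ltac:(lra)).
  pose proof (ekeland_seq_below n p (Nat.le_max_r _ _)) as hbelow. unfold ekeland_below in hbelow.
  pose proof (dist_triangle d Hd (u n) (u p) l).
  assert (eps = e + c * e) by (unfold e; field; lra). nra.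
Qed.

Theorem ekeland_variational : exists ys,
  phi ys + c * d x0 ys <= phi x0 /\ forall w, phi ys <= phi w + c * d ys w.
Proof.
  destruct (Hcomplete u ekeland_seq_cauchy) as (l & Hl).
  pose proof (ekeland_below_limit l Hl) as below_l.
  exists l. split; [apply (below_l 0%nat)|].
  intros w. apply Rnot_lt_le. intro hlt.
  assert (hw : ekeland_below l w) by (unfold ekeland_below; lra).
  assert (l = w) as <-.
  { apply (dist_eq0 d Hd). apply Rle_antisym; [|apply (dist_ge0 d Hd)].
    apply Rnot_lt_le. intro hpos.
    destruct (exists_inv_INR_S_lt (c * d l w / 2)) as (N & hN); [nra|].
    pose proof (ekeland_below_seq_close N l w (below_l (S N))
                  (ekeland_below_trans _ _ _ (below_l (S N)) hw)). lra. }
  rewrite dist_self in hlt by auto. lra.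
Qed.

End Ekeland.

Definition clamp01 (t : R) : R := Rmax 0 (Rmin 1 t).

Lemma clamp01_in t : 0 <= clamp01 t <= 1.
Proof. unfold clamp01, Rmax, Rmin. repeat destruct Rle_dec; lra. Qed.

Lemma clamp01_id t : 0 <= t <= 1 -> clamp01 t = t.
Proof. unfold clamp01, Rmax, Rmin. repeat destruct Rle_dec; lra. Qed.

Lemma clamp01_lipschitz s t : Rabs (clamp01 s - clamp01 t) <= Rabs (s - t).
Proof. unfold clamp01, Rmax, Rmin, Rabs. repeat destruct Rle_dec; repeat destruct Rcase_abs; lra. Qed.

Section LengthSpace.
Context {Y : Type} (d : Y -> Y -> R) (Hd : is_metric d).

Lemma continuity_dist_path p g :
  path_continuous d g -> continuity (fun t => d p (g (clamp01 t))).
Proof.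
  intros gc x eps he.
  destruct (gc (clamp01 x) (clamp01_in x) eps he) as (delta & hdelta & Hdelta).
  exists delta. split; [lra|]. intros s [_ hs]. simpl in *. unfold R_dist in *.
  pose proof (clamp01_lipschitz s x).
  specialize (Hdelta (clamp01 s) (clamp01_in s) ltac:(lra)).
  pose proof (dist_diff_le d Hd p (g (clamp01 s)) (g (clamp01 x))).
  rewrite dist_sym in Hdelta by auto. lra.
Qed.

Lemma path_length_via_point g Lmax t : path_length_le d g Lmax -> 0 <= t <= 1 ->
  d (g 0) (g t) + d (g t) (g 1) <= Lmax.
Proof.
  intros gl ht. specialize (gl [0; t; 1]). simpl in gl.
  enough (d (g 0) (g t) + (d (g t) (g 1) + 0) <= Lmax) by lra.
  apply gl.
  - repeat first [apply Sorted_nil | apply Sorted_cons | apply HdRel_nil | apply HdRel_cons; lra].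
  - repeat first [apply Forall_nil | apply Forall_cons; [lra|]].
Qed.

(* On a path from [p] to [q] of length at most [d p q + th], the point at
   distance [a] from [p] (found by the intermediate value theorem) is almost on
   a geodesic. *)
Lemma length_space_intermediate_point p q a th :
  length_space d -> 0 < a < d p q -> 0 < th ->
  exists z, d p z = a /\ d z q <= d p q + th - a.
Proof.
  intros HL ha hth. destruct (HL p q th hth) as (g & gc & g0 & g1 & gl).
  set (h := fun t => d p (g (clamp01 t)) - a).
  assert (hcont : continuity h).
  { apply continuity_minus; [apply continuity_dist_path; auto | apply continuity_const; intros ? ?; auto]. }
  assert (h0 : h 0 < 0).
  { unfold h. rewrite clamp01_id, g0, dist_self by (auto; lra). lra. }
  assert (h1 : 0 < h 1).
  { unfold h. rewrite clamp01_id, g1 by lra. lra. }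
  destruct (IVT h 0 1 hcont Rlt_0_1 h0 h1) as (t & ht & hz).
  unfold h in hz. rewrite clamp01_id in hz by lra.
  exists (g t). split; [lra|].
  pose proof (path_length_via_point g _ t gl ht). rewrite g0, g1 in *. lra.
Qed.

End LengthSpace.

Lemma list_common_radius {A} (Q : A -> R -> Prop) (l : list A) :
  (forall a r r', 0 < r' <= r -> Q a r -> Q a r') ->
  (forall a, In a l -> exists r, 0 < r /\ Q a r) ->
  exists r, 0 < r /\ forall a, In a l -> Q a r.
Proof.
  intros Hmono. induction l as [|a l IH]; intros H.
  - exists 1. split; [lra|]. intros a [].
  - destruct (H a (or_introl eq_refl)) as (r1 & h1 & q1).
    destruct IH as (r2 & h2 & q2); [intros b hb; apply H; now right|].
    exists (Rmin r1 r2). split; [now apply Rmin_pos|].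
    pose proof (Rmin_l r1 r2); pose proof (Rmin_r r1 r2); pose proof (Rmin_pos r1 r2 h1 h2).
    intros b [<-|hb].
    + apply (Hmono a r1); auto; lra.
    + apply (Hmono b r2); auto; lra.
Qed.

Lemma list_eventually {A} (P : A -> nat -> Prop) (l : list A) :
  (forall a, In a l -> exists J, forall j, (J <= j)%nat -> P a j) ->
  exists J, forall a, In a l -> forall j, (J <= j)%nat -> P a j.
Proof.
  induction l as [|a l IH]; intros H.
  - exists 0%nat. intros a [].
  - destruct (H a (or_introl eq_refl)) as (J1 & h1).
    destruct IH as (J2 & h2); [intros b hb; apply H; now right|].
    exists (max J1 J2). intros b [<-|hb] j hj.
    + apply h1. lia.
    + apply h2; auto. lia.
Qed.

Lemma exists_Forall2 {A B} (Rel : A -> B -> Prop) (l : list A) :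
  (forall a, In a l -> exists b, Rel a b) -> exists l', Forall2 Rel l l'.
Proof.
  induction l as [|a l IH]; intros H.
  - exists []. constructor.
  - destruct (H a (or_introl eq_refl)) as (b & hb).
    destruct IH as (l' & hl'); [intros c hc; apply H; now right|].
    exists (b :: l'). now constructor.
Qed.

Lemma Forall2_In_r {A B} (Rel : A -> B -> Prop) l l' : Forall2 Rel l l' ->
  forall b, In b l' -> exists a, In a l /\ Rel a b.
Proof.
  induction 1 as [|a b l l' hab _ IH]; intros c hc; [destruct hc|].
  destruct hc as [<-|hc].
  - exists a. split; auto. now left.
  - destruct (IH c hc) as (a' & h1 & h2). exists a'. split; auto. now right.
Qed.

Lemma NoDup_Forall2 {A B} (Rel : A -> B -> Prop) l l' : Forall2 Rel l l' -> NoDup l ->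
  (forall a1 a2 b, In a1 l -> In a2 l -> Rel a1 b -> Rel a2 b -> a1 = a2) -> NoDup l'.
Proof.
  induction 1 as [|a b l l' hab hl IH]; intros hnd hinj; constructor.
  - inversion hnd as [|? ? ha hnd']; subst. intro hb.
    destruct (Forall2_In_r _ _ _ hl b hb) as (a' & ha' & hrel).
    assert (a = a') as <- by (apply (hinj a a' b); simpl; auto). contradiction.
  - inversion hnd; subst. apply IH; auto. intros a1 a2 c h1 h2. apply hinj; simpl; auto.
Qed.

Section LimitOfLQMaps.
Context {M N : Type} (dM : M -> M -> R) (dN : N -> N -> R) (L : R)
  (fs : nat -> M -> N) (f : M -> N).
Hypotheses (HM : is_metric dM) (HN : is_metric dN)
  (fs_LQ : forall j, LQ_map dM dN L (fs j)) (fs_conv : loc_unif_conv dM dN fs f).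

Lemma LQ_const_pos (x : M) : 0 < L.
Proof.
  destruct (fs_LQ 0%nat x 1 Rlt_0_1) as [_ hup]. specialize (hup x).
  unfold ball in hup. rewrite !dist_self in hup by auto. specialize (hup Rlt_0_1). lra.
Qed.

Lemma loc_unif_conv_pointwise y eps : 0 < eps ->
  exists J, forall j, (J <= j)%nat -> dN (fs j y) (f y) < eps.
Proof.
  intros he. destruct (fs_conv y) as (r & hr & Hr). destruct (Hr eps he) as (J & HJ).
  exists J. intros j hj. apply HJ; auto. now rewrite dist_self.
Qed.

Lemma LQ_upper_limit x r y : 0 < r -> dM x y < r -> dN (f x) (f y) < L * r.
Proof.
  intros hr hy. pose proof (LQ_const_pos x) as hL. pose proof (dist_ge0 dM HM x y).
  set (r' := (dM x y + r) / 2).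
  assert (hr' : 0 < r' < r) by (unfold r'; lra).
  set (e := (L * r - L * r') / 2).
  assert (he : 0 < e) by (unfold e; nra).
  destruct (list_eventually (fun a j => dN (fs j a) (f a) < e) [x; y]) as (J & HJ).
  { intros a _. now apply loc_unif_conv_pointwise. }
  assert (hx : dN (fs J x) (f x) < e) by (apply HJ; simpl; auto).
  assert (hy' : dN (fs J y) (f y) < e) by (apply HJ; simpl; auto).
  destruct (fs_LQ J x r' (proj1 hr')) as [_ hup].
  assert (dN (fs J x) (fs J y) < L * r') by (apply hup; unfold ball, r'; lra).
  pose proof (dist_triangle dN HN (f x) (fs J x) (f y)).
  pose proof (dist_triangle dN HN (fs J x) (fs J y) (f y)).
  rewrite (dist_sym dN HN (f x) (fs J x)) in *. unfold e in *. lra.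
Qed.

Lemma separating_radius x Rad (l : list M) :
  (forall a, In a l -> dM x a < Rad) ->
  exists r, 0 < r /\ forall a, In a l ->
    r < Rad - dM x a /\ forall b, In b l -> a <> b -> 2 * r <= dM a b.
Proof.
  intros hl. apply list_common_radius.
  { intros a r r' hr [h1 h2]. split; [lra|]. intros b hb hab. specialize (h2 b hb hab). lra. }
  intros a ha. specialize (hl a ha).
  destruct (list_common_radius (fun b r => a <> b -> 2 * r <= dM a b) l) as (r & hr & Hr).
  { intros b r r' hr' h hab. specialize (h hab). lra. }
  { intros b _. destruct (classic (a = b)) as [<-|hab].
    - exists 1. split; [lra|]. contradiction.
    - exists (dM a b / 2). pose proof (dist_neq_pos dM HM a b hab). split; lra. }
  exists (Rmin r ((Rad - dM x a) / 2)).
  pose proof (Rmin_l r ((Rad - dM x a) / 2)); pose proof (Rmin_r r ((Rad - dM x a) / 2)).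
  split; [apply Rmin_pos; lra|]. split; [lra|].
  intros b hb hab. specialize (Hr b hb hab). lra.
Qed.

Lemma unif_k_to_one_limit Rad k :
  (forall j, unif_k_to_one dM Rad k (fs j)) -> unif_k_to_one dM Rad k f.
Proof.
  intros fs_k x l hnd hl. pose proof (LQ_const_pos x) as hL.
  destruct (separating_radius x Rad l) as (r & hr & Hr); [intros a ha; apply (hl a ha)|].
  assert (he : 0 < / L * r / 2) by (pose proof (Rinv_0_lt_compat L hL); nra).
  destruct (list_eventually (fun a j => dN (fs j a) (f a) < / L * r / 2) (x :: l)) as (J & HJ).
  { intros a _. now apply loc_unif_conv_pointwise. }
  set (Rel := fun a w => dM a w < r /\ fs J w = fs J x).
  destruct (exists_Forall2 Rel l) as (l' & hl').
  { intros a ha. destruct (fs_LQ J a r hr) as [hlow _].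
    destruct (hlow (fs J x)) as (w & hw1 & hw2); [|now exists w].
    assert (hJa : dN (fs J a) (f a) < / L * r / 2) by (apply HJ; simpl; auto).
    assert (hJx : dN (fs J x) (f x) < / L * r / 2) by (apply HJ; simpl; auto).
    destruct (hl a ha) as [hfa _]. unfold ball.
    pose proof (dist_triangle dN HN (fs J a) (f a) (fs J x)).
    rewrite hfa, (dist_sym dN HN (f x)) in *. lra. }
  rewrite (Forall2_length hl'). apply (fs_k J x l').
  - apply (NoDup_Forall2 Rel l l' hl' hnd).
    intros a1 a2 w h1 h2 [hw1 _] [hw2 _].
    destruct (classic (a1 = a2)) as [e|hne]; auto. exfalso.
    destruct (Hr a1 h1) as [_ hsep]. specialize (hsep a2 h2 hne).
    pose proof (dist_triangle dM HM a1 w a2). rewrite (dist_sym dM HM w a2) in *. lra.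
  - intros w hw. destruct (Forall2_In_r Rel l l' hl' w hw) as (a & ha & hdist & hfw).
    split; auto. unfold ball. destruct (Hr a ha) as [hrad _].
    pose proof (dist_triangle dM HM x a w). lra.
Qed.

(* If [ys] were not a preimage of [z], we could step from [f ys] a distance [a]
   towards [z]; since [fs J] is [L]-co-Lipschitz near [ys] and close to [f],
   some [w] with [dM ys w] about [L a] gets [f w] about [a] closer to [z],
   contradicting the minimality of [ys] because [c L < 1]. *)
Lemma ekeland_point_is_preimage z c ys :
  length_space dN -> 0 < c -> c * L < 1 ->
  (forall w, dN (f ys) z <= dN (f w) z + c * dM ys w) -> f ys = z.
Proof.
  intros HNl hc hcL Hmin. pose proof (LQ_const_pos ys) as hL.
  set (delta := dN (f ys) z) in *.
  destruct (Rle_lt_or_eq_dec 0 delta (dist_ge0 dN HN _ _)) as [hdelta|hdelta];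
    [|now apply (dist_eq0 dN HN)].
  exfalso.
  destruct (fs_conv ys) as (rho & hrho & Hrho).
  set (a := Rmin (delta / 2) (rho / (2 * L))).
  assert (ha : 0 < a) by (apply Rmin_pos; [lra | apply Rdiv_lt_0_compat; lra]).
  assert (ha_delta : a <= delta / 2) by apply Rmin_l.
  assert (ha_rho : L * a <= rho / 2).
  { assert (a <= rho / (2 * L)) by apply Rmin_r.
    apply Rmult_le_compat_l with (r := L) in H; [|lra].
    replace (L * (rho / (2 * L))) with (rho / 2) in H by (field; lra). exact H. }
  assert (hcL0 : 0 < c * L) by nra.
  set (eps := (1 - c * L) * a / 4).
  assert (heps : 0 < eps) by (unfold eps; nra).
  assert (heps_a : eps <= a / 4) by (unfold eps; nra).
  destruct (length_space_intermediate_point dN HN (f ys) z a eps HNl) as (z' & hz'1 & hz'2);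
    [fold delta; lra | auto |].
  fold delta in hz'2.
  destruct (Hrho eps heps) as (J & HJ). specialize (HJ J (Nat.le_refl _)).
  assert (hJys : dN (fs J ys) (f ys) < eps) by (apply HJ; rewrite dist_self; auto).
  set (s := L * (a + 2 * eps)).
  assert (hs : 0 < s) by (unfold s; nra).
  destruct (fs_LQ J ys s hs) as [hlow _].
  destruct (hlow z') as (w & hw & hfw).
  { unfold ball, s. replace (/ L * (L * (a + 2 * eps))) with (a + 2 * eps) by (field; lra).
    pose proof (dist_triangle dN HN (fs J ys) (f ys) z'). lra. }
  unfold ball in hw.
  assert (hJw : dN (fs J w) (f w) < eps) by (apply HJ; unfold s in hw; nra).
  rewrite hfw in hJw.
  specialize (Hmin w).
  pose proof (dist_triangle dN HN (f w) z' z). rewrite (dist_sym dN HN (f w) z') in *.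
  assert (c * dM ys w < c * s) by (apply Rmult_lt_compat_l; auto).
  replace (c * s) with (c * L * a + 2 * (c * L * eps)) in * by (unfold s; ring).
  assert (c * L * eps < eps) by nra.
  assert (eps * 4 = a - c * L * a) by (unfold eps; field).
  lra.
Qed.

(* Ekeland's principle applied to [w |-> dN (f w) z] with a slope [c] strictly
   between [dN (f x) z / r] and [1 / L]. *)
Lemma LQ_lower_limit x r z :
  complete dM -> length_space dN -> continuous_map dM dN f -> 0 < r ->
  ball dN (f x) (/ L * r) z -> exists y, ball dM x r y /\ f y = z.
Proof.
  intros HMc HNl Hf hr hz. unfold ball in *. pose proof (LQ_const_pos x) as hL.
  pose proof (Rinv_0_lt_compat L hL) as hiL.
  set (phi := fun w => dN (f w) z).
  assert (hphi : 0 <= phi x / r) by (apply Rmult_le_pos; [apply dist_ge0 | left; apply Rinv_0_lt_compat]; auto).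
  assert (hphi_L : phi x / r < / L).
  { apply Rmult_lt_reg_r with r; auto. unfold Rdiv. rewrite Rmult_assoc, Rinv_l, Rmult_1_r by lra.
    unfold phi. lra. }
  set (c := (/ L + phi x / r) / 2).
  assert (hc : 0 < c) by (unfold c; lra).
  assert (hcL : c * L < 1).
  { replace (c * L) with ((1 + phi x / r * L) / 2) by (unfold c; field; lra).
    assert (phi x / r * L < / L * L) by (apply Rmult_lt_compat_r; auto).
    rewrite Rinv_l in H by lra. lra. }
  assert (hcr : phi x < c * r).
  { replace (phi x) with (phi x / r * r) by (field; lra).
    apply Rmult_lt_compat_r; auto. unfold c; lra. }
  destruct (ekeland_variational dM phi c 0 HM HMc hc) with (x0 := x) as (ys & hys & Hmin).
  { intro y. apply dist_ge0; auto. }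
  { intros y eps he. destruct (Hf y eps he) as (delta & hdelta & Hdelta).
    exists delta. split; auto. intros w hw. specialize (Hdelta w hw).
    pose proof (dist_triangle dN HN (f y) (f w) z). unfold phi. lra. }
  exists ys. split.
  - pose proof (dist_ge0 dN HN (f ys) z). apply Rmult_lt_reg_l with c; auto. unfold phi in *. lra.
  - now apply (ekeland_point_is_preimage z c ys).
Qed.

End LimitOfLQMaps.

Theorem theorem1p2 (n : nat) (M N : Type) (dM : M -> M -> R) (dN : N -> N -> R)
  (Rad L : R) (k : nat) (fs : nat -> M -> N) (f : M -> N) :
  bounded_geometry dM n -> bounded_geometry dN n ->
  (forall j, unif_k_to_one dM Rad k (fs j)) ->
  (forall j, LQ_map dM dN L (fs j)) ->
  loc_unif_conv dM dN fs f ->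
  continuous_map dM dN f ->
  unif_k_to_one dM Rad k f /\ LQ_map dM dN L f.
Proof.
  intros (HM & HMc & _) (HN & _ & HNl & _) fs_k fs_LQ fs_conv Hf. split.
  - now apply (unif_k_to_one_limit dM dN L fs f).
  - intros x r hr. split.
    + intros z hz. now apply (LQ_lower_limit dM dN L fs f).
    + intros y hy. now apply (LQ_upper_limit dM dN L fs f).
Qed.
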